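(* For $z,\zeta \in \mathbb C\setminus \mathbb R$, $z \ne \overline \zeta$, \[ \frac{\mathcal P(z)-\mathcal P(\zeta)^*}{z-\overline{\zeta}} = \binom{\mathcal B^*}{-\mathcal A^*} \big(\mathcal M(\zeta)^*\mathcal B^*-\mathcal A^*\big)^{-1} \frac{\mathcal M(z)-\mathcal M(\zeta)^*}{z-\overline \zeta} \big(\mathcal B\,\mathcal M(z)-\mathcal A\big)^{-1} \big( \mathcal B \ \ -\mathcal A \big). \]
   Context: Let $\mathcal A,\mathcal B\in M_n(\mathbb C)$ with ${\rm rank}(\mathcal A\ \mathcal B)=n$ and $\mathcal A\mathcal B^*=\mathcal B\mathcal A^*$. Let $\mathcal M(z)={\rm diag}(m_1(z),\dots,m_n(z))$, where $m_j$ are the Weyl–Titchmarsh functions of Dirac-Krein operators on the edges $e_j=[v,v_j]$ of a star graph (each $m_j$ is a meromorphic Nevanlinna function with $\operatorname{Im} m_j(z)>0$ for $\operatorname{Im} z>0$), so that $\mathcal B\mathcal M(z)-\mathcal A$ is invertible for $z\in\mathbb C\setminus\mathbb R$. Define the $2n\times2n$ matrix function $\mathcal P(z) := \begin{pmatrix}0_n&0_n\\0_n&\mathcal M(z)\end{pmatrix} - \begin{pmatrix}-I_n\\\mathcal M(z)\end{pmatrix}\big(\mathcal B\mathcal M(z)-\mathcal A\big)^{-1} \mathcal B \,\big(-I_n \ \ \mathcal M(z) \big)$. *)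

From HB Require Import structures.
From mathcomp Require Import all_boot all_order all_algebra.
From mathcomp Require Import complex.
Set Implicit Arguments. Unset Strict Implicit. Unset Printing Implicit Defensive.
Import Order.TTheory GRing.Theory Num.Theory.
Local Open Scope ring_scope.

Definition adjmx (C : numClosedFieldType) (m n : nat) (X : 'M[C]_(m, n)) : 'M[C]_(n, m) :=
  (map_mx Num.conj X)^T.

Definition Mdiag (C : numClosedFieldType) (n : nat) (m : 'I_n -> C -> C) (z : C) : 'M[C]_n :=
  diag_mx (\row_j m j z).

Definition Pmx (C : numClosedFieldType) (n : nat) (A B : 'M[C]_n)
  (m : 'I_n -> C -> C) (z : C) : 'M[C]_(n + n) :=
  block_mx 0 0 0 (Mdiag m z)
  - col_mx (- 1%:M) (Mdiag m z) *m invmx (B *m Mdiag m z - A) *m B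
      *m row_mx (- 1%:M) (Mdiag m z).

From HB Require Import structures.
From mathcomp Require Import all_boot all_order all_algebra.
From mathcomp Require Import complex.
Set Implicit Arguments. Unset Strict Implicit. Unset Printing Implicit Defensive.
Import Order.TTheory GRing.Theory Num.Theory.
Local Open Scope ring_scope.

(* Write M := M(z), N := M(zeta)^*, Q := (B  -A) and G(X) := inv(X B^* - A^* ).
   Taking adjoints turns P(zeta)^* into [0 0; 0 N] - (-I; N) B^* G(N) (-I  N),
   and the symmetry A B^* = B A^* gives inv(B M - A) B = B^* G(M), so P(z) has
   the same shape in M.  Since (-I; X) B^* G(X) = (0; I) - Q^* G(X), both are
   instances of the right form [0 0; I 0] + Q^* G(X) (-I  X), whose difference
   factors as in a resolvent identity:
     G(M) (-I  M) - G(N) (-I  N) = G(N) (M - N) inv(B M - A) Q.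
   Only the invertibility of B M(w) - A at w = z, zeta and the symmetry are
   used. *)

Section Adjoint.
Variable C : numClosedFieldType.

Lemma adjmxM m n p (X : 'M[C]_(m, n)) (Y : 'M[C]_(n, p)) :
  adjmx (X *m Y) = adjmx Y *m adjmx X.
Proof. by rewrite /adjmx map_mxM trmx_mul. Qed.

Lemma adjmxN m n (X : 'M[C]_(m, n)) : adjmx (- X) = - adjmx X.
Proof. by rewrite /adjmx map_mxN linearN. Qed.

Lemma adjmxB m n (X Y : 'M[C]_(m, n)) : adjmx (X - Y) = adjmx X - adjmx Y.
Proof. by rewrite /adjmx map_mxB linearB. Qed.

Lemma adjmx0 m n : adjmx (0 : 'M[C]_(m, n)) = 0.
Proof. by rewrite /adjmx map_mx0 trmx0. Qed.

Lemma adjmx1 n : adjmx (1%:M : 'M[C]_n) = 1%:M.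
Proof. by rewrite /adjmx map_mx1 trmx1. Qed.

Lemma adjmx_inv n (X : 'M[C]_n) : adjmx (invmx X) = invmx (adjmx X).
Proof. by rewrite /adjmx map_invmx trmx_inv. Qed.

Lemma adjmx_unit n (X : 'M[C]_n) : (adjmx X \in unitmx) = (X \in unitmx).
Proof. by rewrite /adjmx unitmx_tr map_unitmx. Qed.

Lemma adjmx_block m1 m2 n1 n2 (Xul : 'M[C]_(m1, n1)) (Xur : 'M[C]_(m1, n2))
    (Xdl : 'M[C]_(m2, n1)) (Xdr : 'M[C]_(m2, n2)) :
  adjmx (block_mx Xul Xur Xdl Xdr)
  = block_mx (adjmx Xul) (adjmx Xdl) (adjmx Xur) (adjmx Xdr).
Proof. by rewrite /adjmx map_block_mx tr_block_mx. Qed.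

Lemma adjmx_col m1 m2 n (Xu : 'M[C]_(m1, n)) (Xd : 'M[C]_(m2, n)) :
  adjmx (col_mx Xu Xd) = row_mx (adjmx Xu) (adjmx Xd).
Proof. by rewrite /adjmx map_col_mx tr_col_mx. Qed.

Lemma adjmx_row m n1 n2 (Xl : 'M[C]_(m, n1)) (Xr : 'M[C]_(m, n2)) :
  adjmx (row_mx Xl Xr) = col_mx (adjmx Xl) (adjmx Xr).
Proof. by rewrite /adjmx map_row_mx tr_row_mx. Qed.

End Adjoint.

Section LagrangianPencil.
Variables (F : fieldType) (n : nat).

Lemma invmx_resolvent (X Y : 'M[F]_n) : X \in unitmx -> Y \in unitmx ->
  invmx Y *m (X - Y) *m invmx X = invmx Y - invmx X.
Proof. by move=> uX uY; rewrite mulmxBr mulVmx // mulmxBl mul1mx mulmxK. Qed.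

(* [A'] and [B'] play the roles of [A^*] and [B^*]. *)
Variables A B A' B' : 'M[F]_n.
Implicit Types M N : 'M[F]_n.

Definition Pmx_r M : 'M[F]_(n + n) :=
  block_mx 0 0 1%:M 0
  + col_mx B' (- A') *m invmx (M *m B' - A') *m row_mx (- 1%:M) M.

Lemma Pmx_rE M : M *m B' - A' \in unitmx ->
  block_mx 0 0 0 M
  - col_mx (- 1%:M) M *m B' *m invmx (M *m B' - A') *m row_mx (- 1%:M) M
  = Pmx_r M.
Proof.
move=> uG; set G := invmx (M *m B' - A').
have MBG : M *m B' *m G = 1%:M + A' *m G.
  by rewrite -[M *m B'](subrK A') mulmxDl mulmxV // addrC.
have -> : col_mx (- 1%:M) M *m B' *m G = col_mx 0 1%:M - col_mx B' (- A') *m G.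
  by rewrite !mul_col_mx !mulNmx !mul1mx MBG opp_col_mx add_col_mx sub0r opprK.
rewrite mulmxBl opprB [_ *m _ - _]addrC addrA mul_col_row !mul0mx !mul1mx.
by rewrite opp_block_mx add_block_mx !oppr0 !addr0 opprK subrr add0r.
Qed.

Lemma Pmx_rB M N : M *m B' - A' \in unitmx -> N *m B' - A' \in unitmx ->
  Pmx_r M - Pmx_r N
  = col_mx B' (- A') *m invmx (N *m B' - A') *m (M - N)
    *m (row_mx 0 1%:M - B' *m invmx (M *m B' - A') *m row_mx (- 1%:M) M).
Proof.
move=> uGM uGN; rewrite /Pmx_r opprD addrACA subrr add0r -!mulmxA -mulmxBr.
congr (_ *m _); set GM := invmx (M *m B' - A'); set GN := invmx (N *m B' - A').
have MN_row : (M - N) *m row_mx 0 1%:M = row_mx (- 1%:M) M - row_mx (- 1%:M) N.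
  by rewrite mul_mx_row mulmx0 mulmx1 opp_row_mx add_row_mx subrr.
have resolvent : GN *m (M - N) *m B' *m GM = GN - GM.
  have MNB : (M - N) *m B' = (M *m B' - A') - (N *m B' - A').
    by rewrite mulmxBl opprB addrA subrK.
  by rewrite -(mulmxA GN) MNB invmx_resolvent.
rewrite (mulmxBr (M - N)) (mulmxBr GN) MN_row mulmxBr !mulmxA resolvent mulmxBl.
by rewrite opprB [RHS]addrC addrA subrK.
Qed.

Section Symmetric.
Hypothesis AB'_sym : A *m B' = B *m A'.

Lemma pencil_mulB M : (B *m M - A) *m B' = B *m (M *m B' - A').
Proof. by rewrite mulmxBl mulmxBr mulmxA AB'_sym. Qed.

Lemma invmx_pencil_mulB M : B *m M - A \in unitmx -> M *m B' - A' \in unitmx ->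
  invmx (B *m M - A) *m B = B' *m invmx (M *m B' - A').
Proof.
move=> uK uG; apply: (canRL (mulmxK uG)).
by rewrite -mulmxA -pencil_mulB mulmxA mulVmx ?mul1mx.
Qed.

(* [(1 - (M - M') K B) (M B' - A') = M' B' - A'] with [K := (B M - A)^-1];
   in the adjoint setting [M' := M^*] makes the right side invertible. *)
Lemma pencil_unit M M' : B *m M - A \in unitmx -> M' *m B' - A' \in unitmx ->
  M *m B' - A' \in unitmx.
Proof.
move=> uK uM'; set K := invmx (B *m M - A).
have KBW : K *m B *m (M *m B' - A') = B'.
  by rewrite -mulmxA -pencil_mulB mulmxA mulVmx ?mul1mx.
have LW : (1%:M - (M - M') *m K *m B) *m (M *m B' - A') = M' *m B' - A'.
  rewrite mulmxBl mul1mx -!mulmxA (mulmxA K) KBW mulmxBl opprB.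
  by rewrite addrC addrA subrK.
have : (invmx (M' *m B' - A') *m (1%:M - (M - M') *m K *m B))
         *m (M *m B' - A') = 1%:M by rewrite -mulmxA LW mulVmx.
by case/mulmx1_unit.
Qed.

Lemma row_pencil M : B *m M - A \in unitmx -> M *m B' - A' \in unitmx ->
  row_mx 0 1%:M - B' *m invmx (M *m B' - A') *m row_mx (- 1%:M) M
  = invmx (B *m M - A) *m row_mx B (- A).
Proof.
move=> uK uG; rewrite -invmx_pencil_mulB //.
rewrite !mul_mx_row mulmxN opp_row_mx add_row_mx sub0r opprK mulmx1; congr row_mx.
by rewrite -(mulVmx uK) mulmxBr mulmxA mulmxN addrAC subrr add0r.
Qed.

End Symmetric.
End LagrangianPencil.

Theorem lemma4p3 (R : rcfType) (n : nat) (A B : 'M[R[i]]_n)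
  (m : 'I_n -> R[i] -> R[i])
  (hrank : \rank (row_mx A B) = n)
  (hsym : A *m adjmx B = B *m adjmx A)
  (hnev : forall (j : 'I_n) (w : R[i]), 0 < 'Im w -> 0 < 'Im (m j w))
  (hrefl : forall (j : 'I_n) (w : R[i]), 'Im w != 0 -> m j (w^*) = (m j w)^*)
  (hinv : forall w : R[i], 'Im w != 0 -> B *m Mdiag m w - A \in unitmx)
  (z zeta : R[i]) (hz : 'Im z != 0) (hzeta : 'Im zeta != 0) (hzz : z != zeta^*) :
  (z - zeta^*)^-1 *: (Pmx A B m z - adjmx (Pmx A B m zeta))
  = col_mx (adjmx B) (- adjmx A)
      *m invmx (adjmx (Mdiag m zeta) *m adjmx B - adjmx A)
      *m ((z - zeta^*)^-1 *: (Mdiag m z - adjmx (Mdiag m zeta)))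
      *m invmx (B *m Mdiag m z - A)
      *m row_mx B (- A).
Proof.
rewrite -scalemxAr -!scalemxAl; congr (_ *: _).
have adj_pencil w : adjmx (B *m Mdiag m w - A)
                    = adjmx (Mdiag m w) *m adjmx B - adjmx A.
  by rewrite adjmxB adjmxM.
have uKz := hinv z hz.
have uGz' : adjmx (Mdiag m z) *m adjmx B - adjmx A \in unitmx.
  by rewrite -adj_pencil adjmx_unit.
have uGzeta : adjmx (Mdiag m zeta) *m adjmx B - adjmx A \in unitmx.
  by rewrite -adj_pencil adjmx_unit hinv.
have uGz := pencil_unit hsym uKz uGz'.
have -> : Pmx A B m z = Pmx_r (adjmx A) (adjmx B) (Mdiag m z).
  by rewrite /Pmx -(mulmxA _ _ B) (invmx_pencil_mulB hsym uKz uGz) mulmxA Pmx_rE.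
have -> : adjmx (Pmx A B m zeta)
          = Pmx_r (adjmx A) (adjmx B) (adjmx (Mdiag m zeta)).
  rewrite /Pmx adjmxB adjmx_block !adjmx0 !adjmxM adjmx_col adjmx_row adjmxN.
  by rewrite adjmx1 adjmx_inv adj_pencil !mulmxA (Pmx_rE uGzeta).
by rewrite (Pmx_rB uGz uGzeta) (row_pencil hsym uKz uGz) !mulmxA.
Qed.
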